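(* Let $n\ge3$, $1\le j\le n-2$ and $K\in\mathcal K^n$. For $z\in\{\pm e_n\}$, one has $z\in\operatorname{ext}(K[j],B_L^{n-1}[n-1-j])$ if and only if $\dim TS(K,z)\ge j$. For $z\in\mathbb S^{n-1}\setminus\{\pm e_n\}$, one has $z\in\operatorname{ext}(K[j],B_L^{n-1}[n-1-j])$ if and only if $\dim TS(K,z)\ge j$ and $TS(K,z)\not\subseteq L$.
   Context: $\mathcal K^n$ is the set of convex bodies in $\mathbb R^n$; $L=e_n^\perp$, $B_L^{n-1}=B^n\cap L$; $K[m]$ means $K$ repeated $m$ times. For $K\in\mathcal K^n$, $z\ne o$: $F(K,z)=\{x\in K:\langle x,z\rangle=h_K(z)\}$; $N(K,x)=\{u:\langle x,u\rangle=h_K(u)\}$ is the normal cone at $x\in\partial K$, and $N(K,F)=N(K,x)$ for $x$ in the relative interior of a nonempty convex $F\subseteq K$. The touching cone $T(K,z)$ is the unique face of $N(K,F(K,z))$ containing $z$ in its relative interior, and the touching space is $TS(K,z)=T(K,z)^\perp$ (orthogonal complement of its linear span). For $K_1,\dots,K_{n-1}\in\mathcal K^n$, $z\in\mathbb S^{n-1}$ is $(K_1,\dots,K_{n-1})$-extreme if there are linear hyperplanes $E_i\supseteq T(K_i,z)$ with $\dim(E_1\cap\dots\cap E_{n-1})=1$; $\operatorname{ext}(K_1,\dots,K_{n-1})$ is the set of such $z$. *)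

From HB Require Import structures.
From mathcomp Require Import all_boot all_order all_algebra.
From mathcomp Require Import all_classical all_reals all_analysis.
Set Implicit Arguments. Unset Strict Implicit. Unset Printing Implicit Defensive.
Import Order.TTheory GRing.Theory Num.Theory.
Import numFieldNormedType.Exports.
Local Open Scope classical_set_scope.
Local Open Scope ring_scope.

Section Convex.
Variables (R : realType) (n : nat).
Notation V := 'rV[R]_n.

Definition dot (x y : V) : R := \sum_(i < n) x 0 i * y 0 i.

Definition sphere : set V := [set x | dot x x = 1].

Definition convex_set (C : set V) : Prop :=
  forall x y t, C x -> C y -> 0 <= t <= 1 -> C ((1 - t) *: x + t *: y).

Definition convex_body (K : set V) : Prop :=
  K !=set0 /\ compact K /\ convex_set K.

Definition h (K : set V) (u : V) : R := sup [set dot x u | x in K].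

Definition F (K : set V) (z : V) : set V := [set x | K x /\ dot x z = h K z].

Definition NC (K : set V) (x : V) : set V := [set u | dot x u = h K u].

Definition span (S : set V) : set V :=
  [set x | exists k (v : 'I_k -> V) (c : 'I_k -> R),
     (forall i, S (v i)) /\ x = \sum_(i < k) c i *: v i].
Definition aff (S : set V) : set V :=
  [set x | exists k (v : 'I_k -> V) (c : 'I_k -> R),
     (forall i, S (v i)) /\ \sum_(i < k) c i = 1 /\ x = \sum_(i < k) c i *: v i].

Definition relint (S : set V) : set V :=
  [set x | S x /\ exists e : R, 0 < e /\
     forall y, aff S y -> dot (y - x) (y - x) < e ^+ 2 -> S y].

(* N(K,F) := N(K,x) for x in the relative interior of F *)
Definition NF (K : set V) (Fc : set V) : set V :=
  [set u | exists x, relint Fc x /\ NC K x u].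

Definition face (C G : set V) : Prop :=
  G `<=` C /\ convex_set G /\
  forall x y t, C x -> C y -> 0 < t < 1 -> G ((1 - t) *: x + t *: y) -> G x /\ G y.

(* touching cone T(K,z): the (unique) face of N(K,F(K,z)) containing z in its
   relative interior; written as the intersection of all such faces *)
Definition T (K : set V) (z : V) : set V :=
  [set u | forall G, face (NF K (F K z)) G -> relint G z -> G u].

Definition perp (S : set V) : set V := [set u | forall x, span S x -> dot u x = 0].

Definition TS (K : set V) (z : V) : set V := perp (T K z).

Definition has_dim_ge (S : set V) (k : nat) : Prop :=
  exists s : seq V, [/\ size s = k, (forall x, x \in s -> S x) & free s].
Definition sdim (S : set V) : nat := \max_(k < n.+1 | `[< has_dim_ge S k >]) k.

Definition hyp (a : V) : set V := [set x | dot a x = 0].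

Definition ext (Ks : 'I_n.-1 -> set V) : set V :=
  [set z | sphere z /\ exists a : 'I_n.-1 -> V,
     (forall i, a i != 0 /\ T (Ks i) z `<=` hyp (a i)) /\
     sdim (\bigcap_(i in [set: 'I_n.-1]) hyp (a i)) = 1%N].

Definition en : V := \row_(i < n) (i.+1 == n)%:R.
Definition Lsp : set V := [set x | dot x en = 0].
Definition BL : set V := [set x | dot x x <= 1 /\ Lsp x].

Definition famKB (K : set V) (j : nat) : 'I_n.-1 -> set V :=
  fun i => if (i < j)%N then K else BL.

End Convex.

From Pilot Require Import Defs.
From HB Require Import structures.
From mathcomp Require Import all_boot all_order all_algebra.
From mathcomp Require Import all_classical all_reals all_analysis.
From mathcomp Require Import ring lra zify.
Import Order.TTheory GRing.Theory Num.Theory.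
Import numFieldNormedType.Exports.
Local Open Scope classical_set_scope.
Local Open Scope ring_scope.

(* Since z lies in each of its touching cones, z is (K_1, ..., K_{n-1})-extreme iff
   there are n-1 linearly independent vectors a_i with T(K_i, z) inside a_i^perp.
   For the copies of K this says a_i is in TS(K, z).  The touching cone of B_L is
   contained in the line R e_n at z = +-e_n; at any other unit z it lies in the
   plane spanned by z and e_n and contains e_n, so there the condition on a_i is
   orthogonality to both z and e_n.  At +-e_n, j independent vectors of TS(K, z)
   therefore extend to n-1 independent ones by vectors of L.  Elsewhere the last
   n-1-j vectors lie in the (n-2)-dimensional space {z, e_n}^perp, so independence
   forces some vector of TS(K, z) off L; conversely, such a vector, completed to j
   independent ones inside TS(K, z), extends by vectors of {z, e_n}^perp. *)

Section ExtremeDirections.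
Variables (R : realType) (n : nat).
Notation V := 'rV[R]_n.
Notation dot := (@dot R n).
Notation vspan := (@vector.span _ _).
Notation en := (@en R n).
Notation BL := (@BL R n).
Notation Lsp := (@Lsp R n).

(** * Inner product *)

Lemma dotC (x y : V) : dot x y = dot y x.
Proof. by apply: eq_bigr => i _; rewrite mulrC. Qed.

Lemma dotDl (x y w : V) : dot (x + y) w = dot x w + dot y w.
Proof. by rewrite /Defs.dot -big_split; apply: eq_bigr => i _; rewrite mxE mulrDl. Qed.

Lemma dotZl (c : R) (x w : V) : dot (c *: x) w = c * dot x w.
Proof. by rewrite /Defs.dot mulr_sumr; apply: eq_bigr => i _; rewrite mxE mulrA. Qed.

Lemma dot0l (w : V) : dot 0 w = 0.
Proof. by rewrite -(scale0r 0) dotZl mul0r. Qed.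

Lemma dotNl (x w : V) : dot (- x) w = - dot x w.
Proof. by rewrite -scaleN1r dotZl mulN1r. Qed.

Lemma dotBl (x y w : V) : dot (x - y) w = dot x w - dot y w.
Proof. by rewrite dotDl dotNl. Qed.

Lemma dot_suml (I : Type) (r : seq I) (P : pred I) (F : I -> V) w :
  dot (\sum_(i <- r | P i) F i) w = \sum_(i <- r | P i) dot (F i) w.
Proof. by elim/big_rec2: _ => [|i y1 y2 _ <-]; rewrite ?dot0l ?dotDl. Qed.

Lemma dotDr (x y w : V) : dot w (x + y) = dot w x + dot w y.
Proof. by rewrite !(dotC w) dotDl. Qed.

Lemma dotZr (c : R) (x w : V) : dot w (c *: x) = c * dot w x.
Proof. by rewrite !(dotC w) dotZl. Qed.

Lemma dot0r (w : V) : dot w 0 = 0.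
Proof. by rewrite dotC dot0l. Qed.

Lemma dotNr (x w : V) : dot w (- x) = - dot w x.
Proof. by rewrite !(dotC w) dotNl. Qed.

Lemma dotBr (x y w : V) : dot w (x - y) = dot w x - dot w y.
Proof. by rewrite dotDr dotNr. Qed.

Lemma dot_sumr (I : Type) (r : seq I) (P : pred I) (F : I -> V) w :
  dot w (\sum_(i <- r | P i) F i) = \sum_(i <- r | P i) dot w (F i).
Proof. by rewrite dotC dot_suml; apply: eq_bigr => i _; rewrite dotC. Qed.

Lemma dot_ge0 (x : V) : 0 <= dot x x.
Proof. by apply: sumr_ge0 => i _; rewrite -expr2 sqr_ge0. Qed.

Lemma dot_eq0 (x : V) : (dot x x == 0) = (x == 0).
Proof.
apply/idP/idP => [|/eqP ->]; last by rewrite dot0l.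
rewrite /Defs.dot psumr_eq0 => [/allP x0|i _]; last by rewrite -expr2 sqr_ge0.
apply/eqP/matrixP => i k; rewrite (ord1 i) mxE.
by have := x0 k (mem_index_enum k); rewrite -expr2 sqrf_eq0 => /eqP.
Qed.

Lemma dotBB (x y : V) : dot (x - y) (x - y) = dot x x - 2 * dot x y + dot y y.
Proof. rewrite dotBl !dotBr (dotC y x); lra. Qed.

Lemma dot_le1 (x q : V) : dot x x <= 1 -> dot q q = 1 -> dot x q <= 1.
Proof. by move=> x1 q1; have := dot_ge0 (x - q); rewrite dotBB; lra. Qed.

Lemma dot_eq1 (x q : V) : dot x x <= 1 -> dot q q = 1 -> dot x q = 1 -> x = q.
Proof.
move=> x1 q1 xq; apply/eqP; rewrite -subr_eq0 -dot_eq0 eq_le dot_ge0 andbT.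
by rewrite dotBB xq q1; lra.
Qed.

Definition nrm (x : V) : R := Num.sqrt (dot x x).

Lemma nrm_sqr (x : V) : nrm x ^+ 2 = dot x x.
Proof. by rewrite sqr_sqrtr ?dot_ge0. Qed.

Lemma nrm_eq0 (x : V) : (nrm x == 0) = (x == 0).
Proof. by rewrite sqrtr_eq0 le_eqVlt ltNge dot_ge0 orbF dot_eq0. Qed.

Lemma nrm_gt0 (x : V) : x != 0 -> 0 < nrm x.
Proof. by rewrite -nrm_eq0 lt_def sqrtr_ge0 andbT. Qed.

Lemma scale_nrm (x : V) : x != 0 -> nrm x *: ((nrm x)^-1 *: x) = x.
Proof. by move=> x0; rewrite scalerA mulfV ?scale1r // nrm_eq0. Qed.

Lemma dot_normalize (x : V) : x != 0 ->
  dot ((nrm x)^-1 *: x) ((nrm x)^-1 *: x) = 1.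
Proof.
move=> x0; rewrite dotZl dotZr -nrm_sqr mulrA -expr2 exprVn mulVf //.
by rewrite expf_neq0 // nrm_eq0.
Qed.

Lemma dot_le_nrm (x u : V) : dot x x <= 1 -> dot x u <= nrm u.
Proof.
move=> x1; have [->|u0] := eqVneq u 0; first by rewrite dot0r /nrm dot0l sqrtr0.
rewrite -{1}(scale_nrm _ u0) dotZr ler_piMr ?sqrtr_ge0 //.
exact: dot_le1 (dot_normalize _ u0).
Qed.

Lemma dot_eq_nrm (x u : V) : dot x x <= 1 -> u != 0 -> dot x u = nrm u ->
  x = (nrm u)^-1 *: u.
Proof.
move=> x1 u0 xu; apply: dot_eq1 x1 (dot_normalize _ u0) _.
by rewrite dotZr xu mulVf // nrm_eq0.
Qed.

(** * Dimension and orthogonal complements *)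

Lemma sdimP (S : set V) k : (k <= sdim S)%N <-> has_dim_ge S k.
Proof.
have take_dim k' k'' : (k' <= k'')%N -> has_dim_ge S k'' -> has_dim_ge S k'.
  move=> le [s [sz Ss fs]]; exists (take k' s); split.
  - by rewrite size_takel // sz.
  - by move=> x /mem_take; apply: Ss.
  - by move: fs; rewrite -{1}(cat_take_drop k' s) => /catl_free.
split => [le|Sk].
  apply: take_dim le _; apply: (big_ind (has_dim_ge S)).
  - by exists [::]; split => //; exact: nil_free.
  - by move=> x y Sx Sy; rewrite /maxn; case: ifP.
  - by move=> i /asboolP.
have kn : (k < n.+1)%N.
  case: Sk => s [<- _ /eqP <-]; have := dimvS (subvf (vspan s)).
  by rewrite dimvf /dim /= mul1n.
apply: (@leq_bigmax_cond _ _ (fun i : 'I_n.+1 => nat_of_ord i) (Ordinal kn)).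
exact/asboolP.
Qed.

Lemma has_dim_ge_vspace (S : set V) (U : {vspace V}) k :
  (forall x, x \in U -> S x) -> (k <= \dim U)%N -> has_dim_ge S k.
Proof.
move=> US le; apply/sdimP; apply: leq_trans le _; apply/sdimP.
exists (vbasis U); split; [exact: size_tuple | by move=> x /vbasis_mem /US |].
exact: basis_free (vbasisP U).
Qed.

Definition orth (s : seq V) : set V := [set x | forall v, v \in s -> dot v x = 0].

Lemma orth_span {s : seq V} {x w : V} : orth s x -> w \in vspan s -> dot w x = 0.
Proof.
move=> sx ws; rewrite (coord_span (X := in_tuple s) ws) dot_suml big1 // => i _.
by rewrite dotZl sx ?mulr0 // mem_nth.
Qed.

Definition dotrow (s : seq V) (x : V) : 'rV[R]_(size s) := \row_(i < size s) dot s`_i x.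

Lemma dotrow_is_linear s : linear (dotrow s).
Proof. by move=> a x y; apply/matrixP => i k; rewrite !mxE dotDr dotZr. Qed.

HB.instance Definition _ (s : seq V) :=
  GRing.isLinear.Build R V 'rV[R]_(size s) *:%R (dotrow s) (dotrow_is_linear s).

Definition orthv (s : seq V) : {vspace V} := lker (linfun (dotrow s)).

Lemma orthv_orth (s : seq V) x : x \in orthv s -> orth s x.
Proof.
rewrite memv_ker lfunE /= => /eqP sx0 v vs.
have vi : (index v s < size s)%N by rewrite index_mem.
by have := congr1 (fun M : 'rV_(size s) => M 0 (Ordinal vi)) sx0; rewrite !mxE /= nth_index.
Qed.

Lemma dim_orthv (s : seq V) : (n <= \dim (orthv s) + size s)%N.
Proof.
have dimV : \dim (fullv : {vspace V}) = n by rewrite dimvf dim_matrix; exact: mul1n.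
have := limg_ker_dim (linfun (dotrow s)) fullv; rewrite capfv dimV => dim_sum.
rewrite -[X in (X <= _)%N]dim_sum leq_add2l.
have := dimvS (subvf (linfun (dotrow s) @: fullv)%VS).
by rewrite dimvf dim_matrix mul1r.
Qed.

Lemma has_dim_ge_orth (s : seq V) k : (\dim (vspan s) + k <= n)%N ->
  has_dim_ge (orth s) k.
Proof.
move=> le; apply: (@has_dim_ge_vspace _ (orthv (vbasis (vspan s)))).
  move=> x /orthv_orth bx v vs; apply: orth_span bx _.
  by rewrite (span_basis (vbasisP _)) memv_span.
have := dim_orthv (vbasis (vspan s)); rewrite size_tuple; lia.
Qed.

Lemma free_not_has_dim_ge_orth (s : seq V) k : free s -> (n < size s + k)%N ->
  ~ has_dim_ge (orth s) k.
Proof.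
move=> fs + [t [tk ts ft]]; rewrite -tk => lt.
have cap : (vspan s :&: vspan t)%VS = 0%VS.
  apply/eqP; rewrite -subv0; apply/subvP => w /memv_capP [ws wt]; rewrite memv0.
  rewrite -dot_eq0; apply/eqP/(orth_span _ ws) => v vs.
  by rewrite dotC (orth_span _ wt) // => x xt; rewrite dotC ts.
have := dimv_sum_cap (vspan s) (vspan t); rewrite cap dimv0 addn0 (eqP fs) (eqP ft).
have := dimvS (subvf (vspan s + vspan t)%VS); rewrite dimvf dim_matrix mul1r.
by move=> + dim_sum; rewrite dim_sum leqNgt lt.
Qed.

Lemma free_extend (W : {vspace V}) k (s : seq V) : free s ->
  (k + size s <= \dim (vspan s + W))%N ->
  exists t, [/\ size t = k, {subset t <= W} & free (s ++ t)].
Proof.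
elim: k s => [|k IHk] s fs le; first by exists [::]; rewrite cats0.
have /subvPn [w wW wNs] : ~~ (W <= vspan s)%VS.
  by apply/negP => /addv_idPl sW; move: le; rewrite sW (eqP fs) addSn ltnNge leq_addl.
have fsw : free (s ++ [:: w]).
  by rewrite (perm_free (permEl (perm_catC s [:: w]))) free_cons wNs fs.
have span_sw : (vspan (s ++ [:: w]) + W = vspan s + W)%VS.
  rewrite span_cat span_seq1 -addvA; congr (_ + _)%VS.
  by apply/addv_idPr; rewrite -memvE.
have [t [tk tW ft]] : exists t, [/\ size t = k, {subset t <= W} & free ((s ++ [:: w]) ++ t)].
  by apply: IHk fsw _; rewrite span_sw size_cat /= addn1 -addSnnS.
exists (w :: t); split; [by rewrite /= tk | | by rewrite -cat1s catA].
by move=> x; rewrite inE => /orP [/eqP ->|/tW].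
Qed.

(** * Faces, touching cones and extreme directions *)

Definition lincomb_closed (C : set V) : Prop :=
  forall k (v : 'I_k -> V) (c : 'I_k -> R),
    (forall i, C (v i)) -> C (\sum_(i < k) c i *: v i).

Lemma aff_sub {S C : set V} : lincomb_closed C -> S `<=` C -> aff S `<=` C.
Proof. by move=> C_lin SC _ [k [v [c [Sv [_ ->]]]]]; apply: C_lin => i; apply: SC. Qed.

Lemma relint_lincomb_closed (C : set V) x : lincomb_closed C -> C x -> relint C x.
Proof.
move=> C_lin Cx; split => //; exists 1; split; first exact: ltr01.
by move=> y /(aff_sub C_lin (@subset_refl _ C)).
Qed.

Lemma convex_face (C : set V) : Defs.convex_set C -> face C C.
Proof. by move=> C_cvx; split=> [x //|]; split=> [|x y t Cx Cy _ _]. Qed.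

Lemma T_self (X : set V) z : T X z z.
Proof. by move=> G _ []. Qed.

Lemma T_sub_face (X : set V) z G :
  face (NF X (F X z)) G -> relint G z -> T X z `<=` G.
Proof. by move=> fG zG u; apply. Qed.

Lemma relint_set1 (q : V) : relint [set q] q.
Proof.
split => //; exists 1; split; first exact: ltr01.
move=> y [k [v [c [vq [c1 ->]]]]] _.
by rewrite (eq_bigr (fun i => c i *: q)) => [|i _]; rewrite ?vq // -scaler_suml c1 scale1r.
Qed.

Lemma sub_hyp_perp (X : set V) a : X `<=` hyp a <-> perp X a.
Proof.
split=> [X_a x [k [v [c [Xv ->]]]]|X_a x Xx].
  by rewrite dot_sumr big1 // => i _; rewrite dotZr (X_a _ (Xv i)) mulr0.
apply: X_a; exists 1%N, (fun _ => x), (fun _ => 1); split => //.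
by rewrite big_ord1 scale1r.
Qed.

Lemma perp_span {X : set V} {s : seq V} {w : V} :
  (forall v, v \in s -> perp X v) -> w \in vspan s -> perp X w.
Proof. by move=> s_X ws y Xy; apply: (orth_span _ ws) => v vs; exact: s_X. Qed.

Lemma nth_map_enum m (a : 'I_m -> V) (i : 'I_m) : [seq a k | k <- enum 'I_m]`_i = a i.
Proof. by rewrite (nth_map i) ?size_enum_ord // nth_ord_enum. Qed.

Lemma bigcap_hyp_nth (u : seq V) : size u = n.-1 ->
  \bigcap_(i in [set: 'I_n.-1]) hyp u`_i = orth u.
Proof.
move=> su; apply/seteqP; split => [x ux v /(nthP 0) [i iu <-]|x ux i _].
  have i_lt : (i < n.-1)%N by rewrite -su.
  exact: (ux (Ordinal i_lt)).
by apply: ux; rewrite mem_nth // su.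
Qed.

Lemma extP (Ks : 'I_n.-1 -> set V) z : ext Ks z <->
  sphere z /\ exists2 u : seq V, size u = n.-1 /\ free u &
                                 forall i : 'I_n.-1, T (Ks i) z `<=` hyp u`_i.
Proof.
split=> [[z1 [a [a_hyp dim1]]]|[z1 [u [su fu] u_hyp]]].
  set u := [seq a i | i <- enum 'I_n.-1].
  have su : size u = n.-1 by rewrite size_map size_enum_ord.
  have a_u : forall i, a i = u`_i by move=> i; rewrite nth_map_enum.
  split=> //; exists u; last by move=> i; rewrite -a_u; case: (a_hyp i).
  split=> //; apply/idPn => nfu.
  have : (2 <= sdim (orth u))%N.
    apply/sdimP/has_dim_ge_orth; move: nfu (dim_span u); rewrite /free su => nfu le.
    have : (\dim (vspan u) < n.-1)%N by rewrite ltn_neqAle nfu le.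
    lia.
  have cap_u : \bigcap_(i in [set: 'I_n.-1]) hyp (a i) = orth u.
    by rewrite -bigcap_hyp_nth //; apply: eq_bigcapr => i _; rewrite a_u.
  by rewrite -cap_u dim1.
split=> //; exists (fun i => u`_i); split.
  by move=> i; split=> //; apply: (free_not0 fu); rewrite mem_nth // su.
rewrite bigcap_hyp_nth //; apply/eqP; rewrite eqn_leq; apply/andP; split.
  rewrite leqNgt; apply/negP => /sdimP; apply: free_not_has_dim_ge_orth fu _.
  by rewrite su; lia.
apply/sdimP; exists [:: z]; split => //.
  move=> x; rewrite inE => /eqP -> v /(nthP 0) [i iu <-].
  have i_lt : (i < n.-1)%N by rewrite -su.
  exact: (u_hyp (Ordinal i_lt) z (T_self _ _)).
by rewrite seq1_free -dot_eq0; move: z1; rewrite /sphere /= => ->; exact: oner_neq0.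
Qed.

(** * The unit ball [B_L] of [L] *)

Lemma sup_eq_max (S : set R) m : S m -> (forall s, S s -> s <= m) -> sup S = m.
Proof.
move=> Sm ub; apply/eqP; rewrite eq_le ge_sup /=; [|by exists m|by []].
by apply: sup_upper_bound => //; split; exists m.
Qed.

Lemma Lsp_lincomb_closed : lincomb_closed Lsp.
Proof.
move=> k v c Lv; rewrite /Defs.Lsp /= dot_suml big1 // => i _.
by rewrite dotZl Lv mulr0.
Qed.

Lemma LspZ c x : Lsp x -> Lsp (c *: x).
Proof. by rewrite /Defs.Lsp /= dotZl => ->; rewrite mulr0. Qed.

Lemma BL0 : BL 0.
Proof. by split; rewrite /Defs.Lsp /= dot0l // ler01. Qed.

Definition projL (u : V) : V := u - dot u en *: en.

Lemma projL_is_linear : linear projL.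
Proof.
move=> a x y; rewrite /projL dotDl dotZl scalerDl scalerBr -scalerA.
by rewrite addrACA opprD.
Qed.

HB.instance Definition _ := GRing.isLinear.Build R V V *:%R projL projL_is_linear.

Lemma projL_decomp (u : V) : u = projL u + dot u en *: en.
Proof. by rewrite subrK. Qed.

Lemma dot_projLr (x u : V) : Lsp x -> dot x (projL u) = dot x u.
Proof. by rewrite /Defs.Lsp /= dotBr dotZr => ->; rewrite mulr0 subr0. Qed.

Definition en_line : set V := [set u | projL u = 0].

Lemma en_line_lincomb_closed : lincomb_closed en_line.
Proof.
move=> k v c line_v; rewrite /en_line /= linear_sum big1 // => i _.
by rewrite linearZ /= line_v scaler0.
Qed.

Section UnitBallOfL.
Hypothesis n_gt0 : (0 < n)%N.

Lemma en_en : dot en en = 1.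
Proof.
have lt_n : (n.-1 < n)%N by rewrite ltn_predL.
rewrite /Defs.dot (bigD1 (Ordinal lt_n)) //= big1 ?addr0.
  by rewrite /Defs.en mxE /= prednK // eqxx mulr1.
move=> i; rewrite /Defs.en !mxE; case: (i.+1 =P n) => [i_last|_]; last by rewrite mul0r.
have -> : i = Ordinal lt_n by apply/val_inj; exact: (congr1 predn i_last).
by rewrite eqxx.
Qed.

Lemma Lsp_projL (u : V) : Lsp (projL u).
Proof. by rewrite /Defs.Lsp /= dotBl dotZl en_en mulr1 subrr. Qed.

Lemma projL_en : projL en = 0.
Proof. by rewrite /projL en_en scale1r subrr. Qed.

Lemma dot_projL_le (w : V) : dot (projL w) (projL w) <= dot w w.
Proof.
move: (projL_decomp w) (Lsp_projL w); set a := dot w en; set pw := projL w.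
rewrite /Defs.Lsp /=; clearbody a pw => -> pw_en.
by rewrite dotDl !dotDr !dotZl !dotZr en_en (dotC en) pw_en; nra.
Qed.

Lemma h_BL (u : V) : h BL u = nrm (projL u).
Proof.
apply: sup_eq_max => [|_ [x [x1 Lx] <-]]; last first.
  by rewrite -dot_projLr //; exact: dot_le_nrm _ _ x1.
have [pu0|pu0] := eqVneq (projL u) 0.
  by exists 0; [exact: BL0 | rewrite pu0 dot0l /nrm dot0l sqrtr0].
have Lq : Lsp ((nrm (projL u))^-1 *: projL u) by apply/LspZ/Lsp_projL.
exists ((nrm (projL u))^-1 *: projL u); first by split; rewrite ?dot_normalize ?lexx.
by rewrite -dot_projLr // dotZl -nrm_sqr expr2 mulKf ?nrm_eq0.
Qed.

Lemma aff_BL : aff BL = Lsp.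
Proof.
apply/seteqP; split; first by apply: aff_sub Lsp_lincomb_closed _ => x [].
move=> y Ly; set c := 1 + dot y y.
have c_gt0 : 0 < c by have := dot_ge0 y; rewrite /c; lra.
exists 2%N, (fun i : 'I_2 => if i == ord0 then c^-1 *: y else 0),
  (fun i : 'I_2 => if i == ord0 then c else 1 - c); split; last split.
- move=> i; case: eqP => _; last exact: BL0.
  split; last exact: LspZ.
  rewrite dotZl dotZr mulrA -expr2 exprVn mulrC ler_pdivrMr ?exprn_gt0 // mul1r.
  by rewrite /c; have := dot_ge0 y; nra.
- by rewrite !big_ord_recl big_ord0 /=; lra.
- by rewrite !big_ord_recl big_ord0 /= scalerA mulfV ?gt_eqF // scale1r scaler0 !addr0.
Qed.

Lemma relint_BL0 : relint BL 0.
Proof.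
split; first exact: BL0.
exists 1; split; first exact: ltr01.
rewrite aff_BL => y Ly; rewrite subr0 expr1n => y1; split => //; exact: ltW.
Qed.

Lemma NF_BL_BL : NF BL BL = en_line.
Proof.
apply/seteqP; split; last first.
  move=> u pu0; exists 0; split; first exact: relint_BL0.
  by rewrite /NC /= dot0l h_BL pu0 /nrm dot0l sqrtr0.
move=> u [x [[[_ Lx] [e [e_gt0 ball_e]]] xu]]; move: xu; rewrite /NC /= h_BL => xu.
apply/eqP; rewrite -dot_eq0 eq_le dot_ge0 andbT leNgt; apply/negP => d_gt0.
(* Moving [x] slightly towards [projL u] stays in [BL], as [x] is relatively
   interior, but raises [dot _ u] above [h BL u]. *)
pose del := e / (1 + dot (projL u) (projL u)).
have del_gt0 : 0 < del by apply: divr_gt0 => //; lra.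
have e_del : e = del * (1 + dot (projL u) (projL u)).
  by rewrite /del divfK // gt_eqF //; lra.
have Ly : Lsp (x + del *: projL u).
  by rewrite /Defs.Lsp /= dotDl dotZl Lx Lsp_projL mulr0 addr0.
have [y1 _] : BL (x + del *: projL u).
  apply: ball_e; first by rewrite aff_BL.
  by rewrite addrC addKr dotZl dotZr e_del; nra.
have := dot_le_nrm _ (projL u) y1; rewrite dotDl dotZl dot_projLr // xu.
by have := mulr_gt0 del_gt0 d_gt0; lra.
Qed.

Lemma F_BL_pole z : z = en \/ z = - en -> F BL z = BL.
Proof.
move=> pole; have pz0 : projL z = 0 by case: pole => ->; rewrite ?linearN /= projL_en ?oppr0.
apply/seteqP; split; first by move=> x [].
move=> x [x1 Lx]; split=> //.
by rewrite h_BL pz0 /nrm dot0l sqrtr0 -dot_projLr // pz0 dot0r.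
Qed.

Lemma T_BL_pole z : z = en \/ z = - en -> T BL z `<=` en_line.
Proof.
move=> pole; apply: (@T_sub_face _ _ en_line); first rewrite F_BL_pole // NF_BL_BL.
  apply: convex_face => x y t x0 y0 _.
  by rewrite /en_line /= linearD !linearZ /= x0 y0 !scaler0 addr0.
apply: relint_lincomb_closed en_line_lincomb_closed _.
by case: pole => ->; rewrite /en_line /= ?linearN /= projL_en ?oppr0.
Qed.

Section NonPole.
Variable z : V.
Hypotheses (z_sphere : sphere z) (z_neq_en : z <> en) (z_neq_Nen : z <> - en).

Lemma projL_z_neq0 : projL z != 0.
Proof.
apply/eqP => pz0; have := projL_decomp z; rewrite pz0 add0r.
set c := dot z en; clearbody c => z_eq.
move: z_sphere; rewrite /sphere /= z_eq dotZl dotZr en_en mulr1 -expr2 => /eqP.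
by rewrite sqrf_eq1 => /orP [] /eqP c1; move: z_eq; rewrite c1 ?scale1r ?scaleN1r.
Qed.

Let r := nrm (projL z).
Let p := r^-1 *: projL z.

Lemma r_gt0 : 0 < r.
Proof. exact: nrm_gt0 projL_z_neq0. Qed.

Lemma p_unit : dot p p = 1.
Proof. exact: dot_normalize projL_z_neq0. Qed.

Lemma Lsp_p : Lsp p.
Proof. exact/LspZ/Lsp_projL. Qed.

Lemma projL_z_eq : projL z = r *: p.
Proof. by rewrite scale_nrm // projL_z_neq0. Qed.

Lemma dot_zp : dot z p = r.
Proof.
by rewrite dotC -dot_projLr; [rewrite projL_z_eq (dotZr _ p) p_unit mulr1 | exact: Lsp_p].
Qed.

Lemma F_BL_z : F BL z = [set p].
Proof.
apply/seteqP; split => [x [[x1 Lx]]|x ->].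
  rewrite h_BL => xz; apply: (dot_eq_nrm _ _ x1 projL_z_neq0).
  by rewrite dot_projLr.
split; first by split; [rewrite p_unit lexx | exact: Lsp_p].
by rewrite h_BL dotC dot_zp.
Qed.

(* the plane spanned by [p] and [en] *)
Definition plane : set V := [set u | projL u = dot u p *: p].
Definition halfplane : set V := [set u | plane u /\ 0 <= dot u p].

Lemma plane_lincomb_closed : lincomb_closed plane.
Proof.
move=> k v c plane_v; rewrite /plane /= linear_sum dot_suml scaler_suml.
by apply: eq_bigr => i _; rewrite linearZ /= plane_v dotZl scalerA.
Qed.

Lemma NF_BL_z : NF BL (F BL z) = halfplane.
Proof.
rewrite F_BL_z; apply/seteqP; split => [u [_ [[-> _]]]|u [pl_u up_ge0]].
  rewrite /NC /= h_BL => pu; split; last by rewrite dotC pu sqrtr_ge0.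
  have [pu0|pu0] := eqVneq (projL u) 0.
    by rewrite /plane /= pu0 dotC pu pu0 /nrm dot0l sqrtr0 scale0r.
  have p_eq : p = (nrm (projL u))^-1 *: projL u.
    apply: (dot_eq_nrm _ _ _ pu0); first by rewrite p_unit.
    by rewrite dot_projLr //; exact: Lsp_p.
  by rewrite /plane /= dotC pu p_eq scale_nrm.
exists p; split; first exact: relint_set1.
rewrite /NC /= h_BL pl_u /nrm (dotZl _ p) (dotZr _ p) p_unit mulr1 -expr2 sqrtr_sqr.
by rewrite ger0_norm // dotC.
Qed.

Lemma en_T_BL : T BL z en.
Proof.
move=> G [_ [_ G_ext]] [Gz _]; rewrite NF_BL_z in G_ext.
have h_en : halfplane en.
  by rewrite /halfplane /plane /= projL_en dotC Lsp_p scale0r lexx.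
have h_refl : halfplane (2%:R *: z - en).
  have dot_p : dot (2%:R *: z - en) p = 2%:R * r.
    by rewrite dotBl dotZl dot_zp (dotC en) Lsp_p subr0.
  split; last by rewrite dot_p mulr_ge0 // ltW // r_gt0.
  by rewrite /plane /= dot_p linearB linearZ /= projL_en subr0 projL_z_eq scalerA.
(* [z] is the midpoint of [en] and of its reflection [2 z - en], both in [halfplane]. *)
have half : 0 < (2%:R^-1 : R) < 1 by apply/andP; split; lra.
have := G_ext _ _ _ h_refl h_en half.
have -> : (1 - 2%:R^-1) *: (2%:R *: z - en) + 2%:R^-1 *: en = z.
  rewrite (_ : 1 - 2%:R^-1 = 2%:R^-1); last by field.
  by rewrite -scalerDr subrK scalerA mulVf ?scale1r // pnatr_eq0.
by case/(_ Gz).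
Qed.

Lemma T_BL_sub_halfplane : T BL z `<=` halfplane.
Proof.
have hz : halfplane z.
  by split; [rewrite /plane /= dot_zp projL_z_eq | rewrite dot_zp ltW // r_gt0].
apply: (@T_sub_face _ _ halfplane); first rewrite NF_BL_z.
  apply: convex_face => x y t [pl_x x_ge0] [pl_y y_ge0] /andP [t_ge0 t_le1]; split.
    rewrite /plane /= linearD !linearZ /= pl_x pl_y dotDl !dotZl !scalerA -scalerDl.
    by congr (_ *: _); ring.
  by rewrite dotDl !dotZl addr_ge0 // mulr_ge0 // subr_ge0.
split => //; exists r; split; first exact: r_gt0.
have half_sub : halfplane `<=` plane by move=> u [].
move=> y /(aff_sub plane_lincomb_closed half_sub) pl_y yz_lt; split => //.
have pl_yz : plane (y - z).
  by rewrite /plane /= linearB /= pl_y hz.1 dotBl -scalerBl.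
(* [|dot y p - r| <= |y - z| < r], hence [dot y p > 0]. *)
have := dot_projL_le (y - z).
rewrite pl_yz (dotZl _ p) (dotZr _ p) p_unit mulr1 dotBl dot_zp.
by have := r_gt0; nra.
Qed.

Lemma halfplane_perp w u : dot w z = 0 -> dot w en = 0 -> halfplane u -> dot w u = 0.
Proof.
move=> wz wen [pl_u _].
have wp : dot w p = 0.
  by rewrite dotZr dotBr dotZr wz wen mulr0 subr0 mulr0.
by rewrite (projL_decomp u) pl_u dotDr (dotZr _ p) (dotZr _ en) wp wen !mulr0 addr0.
Qed.

End NonPole.

Lemma T_BL_sub_hyp z w : sphere z -> dot w z = 0 -> dot w en = 0 -> T BL z `<=` hyp w.
Proof.
move=> z1 wz wen u; have [pole|/not_orP [z_en z_Nen]] := pselect (z = en \/ z = - en).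
  move=> /(T_BL_pole _ pole) pu0.
  by rewrite /hyp /= (projL_decomp u) pu0 add0r dotZr wen mulr0.
by move=> /(T_BL_sub_halfplane _ z1 z_en z_Nen); exact: halfplane_perp.
Qed.

(** * The family [(K[j], B_L[n-1-j])] *)

Section FamilyKB.
Variables (K : set V) (j : nat).
Hypothesis j_le : (j <= n.-1)%N.
Notation Ks := (famKB K j).

Lemma famKB_K (i : 'I_n.-1) : (i < j)%N -> Ks i = K.
Proof. by rewrite /famKB => ->. Qed.

Lemma famKB_BL (i : 'I_n.-1) : (j <= i)%N -> Ks i = BL.
Proof. by rewrite /famKB ltnNge => ->. Qed.

Lemma ext_famKB_dim_TS z : ext Ks z -> (j <= sdim (TS K z))%N.
Proof.
move=> /extP [_ [u [su fu] u_hyp]]; apply/sdimP; exists (take j u); split.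
- by rewrite size_takel // su.
- move=> x /(nthP 0) [i]; rewrite size_takel ?su // => ij <-.
  have i_lt : (i < n.-1)%N by exact: leq_trans ij j_le.
  by move: (u_hyp (Ordinal i_lt)); rewrite famKB_K // nth_take // => /sub_hyp_perp.
- by move: fu; rewrite -{1}(cat_take_drop j u) => /catl_free.
Qed.

Lemma ext_famKB_TS_not_sub_L z : sphere z -> z <> en -> z <> - en ->
  ext Ks z -> ~ TS K z `<=` Lsp.
Proof.
move=> z1 z_en z_Nen /extP [_ [u [su fu] u_hyp]] TS_L.
apply: (free_not_has_dim_ge_orth _ 2 fu); first by rewrite su; lia.
exists [:: z; en]; split => //.
  move=> x x_in v /(nthP 0) [i iu <-]; have i_lt : (i < n.-1)%N by rewrite -su.
  move: x_in; rewrite !inE => /orP [] /eqP ->.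
    exact: (u_hyp (Ordinal i_lt) z (T_self _ _)).
  case: (ltnP i j) => ij.
    by apply: TS_L; move: (u_hyp (Ordinal i_lt)); rewrite famKB_K // => /sub_hyp_perp.
  by apply: (u_hyp (Ordinal i_lt)); rewrite famKB_BL //; exact: en_T_BL.
rewrite free_cons seq1_free span_seq1 -dot_eq0 en_en oner_neq0 andbT.
apply/vlineP => -[c z_c]; move: (projL_z_neq0 _ z1 z_en z_Nen).
by rewrite z_c linearZ /= projL_en scaler0 eqxx.
Qed.

Lemma ext_famKB_of_free z (s t : seq V) : sphere z ->
  size s = j -> size t = (n.-1 - j)%N -> free (s ++ t) ->
  (forall v, v \in s -> TS K z v) ->
  (forall w, w \in t -> dot w z = 0 /\ dot w en = 0) -> ext Ks z.
Proof.
move=> z1 sj tj fst s_TS t_perp; apply/extP; split => //.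
exists (s ++ t); first by rewrite size_cat sj tj; split => //; lia.
move=> i; rewrite nth_cat sj; case: ltnP => ij.
  by rewrite famKB_K //; apply/sub_hyp_perp/s_TS; rewrite mem_nth // sj.
have [wz wen] : dot t`_(i - j) z = 0 /\ dot t`_(i - j) en = 0.
  by apply: t_perp; rewrite mem_nth // tj; have := ltn_ord i; lia.
by rewrite famKB_BL //; exact: T_BL_sub_hyp.
Qed.

Lemma ext_famKB_pole z : z = en \/ z = - en -> (j <= sdim (TS K z))%N -> ext Ks z.
Proof.
move=> pole /sdimP [s [sj s_TS fs]].
have [t [tj t_en ft]] : exists t,
    [/\ size t = (n.-1 - j)%N, {subset t <= orthv [:: en]} & free (s ++ t)].
  apply: free_extend fs _; have := dim_orthv [:: en]; rewrite /= => dim_en.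
  apply: leq_trans (dimvS (addvSr (vspan s) (orthv [:: en]))).
  by rewrite sj subnK // -subn1 leq_subLR addnC.
have z1 : sphere z by case: pole => ->; rewrite /sphere /= ?dotNl ?dotNr ?opprK en_en.
apply: ext_famKB_of_free z1 sj tj ft s_TS _ => w /t_en /orthv_orth w_en.
have wen : dot w en = 0 by rewrite dotC; apply: w_en; rewrite inE.
by split=> //; case: pole => ->; rewrite ?dotNr wen ?oppr0.
Qed.

Lemma ext_famKB_nonpole z : (0 < j)%N -> sphere z -> z <> en -> z <> - en ->
  (j <= sdim (TS K z))%N -> ~ TS K z `<=` Lsp -> ext Ks z.
Proof.
move=> j_gt0 z1 z_en z_Nen /sdimP [s [sj s_TS fs]] TS_L.
have [v [TSv v_en]] : exists v, TS K z v /\ dot v en != 0.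
  apply: contrapT => no_v; apply: TS_L => x TSx; apply/eqP/negPn/negP => x_en.
  by apply: no_v; exists x.
have v0 : v != 0 by apply: contraNneq v_en => ->; rewrite dot0l.
(* A free family of size [j] in [TS K z] through [v] ... *)
have [t1 [t1j t1_s ft1]] : exists t,
    [/\ size t = j.-1, {subset t <= vspan s} & free ([:: v] ++ t)].
  apply: free_extend _ _; first by rewrite seq1_free.
  have := dimvS (addvSr (vspan [:: v]) (vspan s)); rewrite (eqP fs) sj /= => le_j.
  by apply: leq_trans le_j; rewrite addn1 prednK.
set s1 := [:: v] ++ t1.
have s1j : size s1 = j by rewrite /s1 size_cat t1j /=; lia.
have s1_TS w : w \in s1 -> TS K z w.
  rewrite /s1 /= inE => /orP [/eqP -> //|wt1]; exact: perp_span s_TS (t1_s _ wt1).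
(* ... is completed inside [W], which meets [<[v]>] trivially since [v] is off [L]. *)
set W := orthv [:: z; en].
have vW : (<[v]> :&: W)%VS = 0%VS.
  apply/eqP; rewrite -subv0; apply/subvP => _ /memv_capP [/vlineP [c ->] /orthv_orth cvW].
  have /eqP : dot en (c *: v) = 0 by apply: cvW; rewrite !inE eqxx orbT.
  by rewrite dotZr dotC mulf_eq0 (negbTE v_en) orbF memv0 => /eqP ->; rewrite scale0r.
have [t2 [t2j t2W ft2]] : exists t,
    [/\ size t = (n.-1 - j)%N, {subset t <= W} & free (s1 ++ t)].
  apply: free_extend ft1 _.
  have v_s1 : (<[v]> <= vspan s1)%VS by rewrite span_cat span_seq1 addvSl.
  apply: leq_trans (dimvS (addvS v_s1 (subvv W))).
  rewrite dimv_disjoint_sum // dim_vline v0 s1j subnK //=.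
  have := dim_orthv [:: z; en]; rewrite -/W /= => dim_W.
  by rewrite -subn1 leq_subLR addnA addnC.
apply: ext_famKB_of_free z1 s1j t2j ft2 s1_TS _ => w /t2W /orthv_orth w_perp.
by split; rewrite dotC; apply: w_perp; rewrite !inE eqxx ?orbT.
Qed.

End FamilyKB.

End UnitBallOfL.

End ExtremeDirections.

Theorem lemma3p9 (R : realType) (n j : nat) (K : set 'rV[R]_n) :
  (3 <= n)%N -> (1 <= j)%N -> (j <= n - 2)%N -> convex_body K ->
  (forall z : 'rV[R]_n, (z = @en R n \/ z = - @en R n) ->
     (ext (famKB K j) z <-> (j <= sdim (TS K z))%N)) /\
  (forall z : 'rV[R]_n, sphere z -> z <> @en R n -> z <> - @en R n ->
     (ext (famKB K j) z <-> (j <= sdim (TS K z))%N /\ ~ (TS K z `<=` @Lsp R n))).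
Proof.
move=> n_ge3 j_ge1 j_le _; have n_gt0 : (0 < n)%N by lia.
have j_le' : (j <= n.-1)%N by lia.
split=> [z pole|z z1 z_en z_Nen].
  by split; [exact: ext_famKB_dim_TS | exact: ext_famKB_pole].
split=> [ext_z|[TS_j TS_L]]; last exact: ext_famKB_nonpole.
split; first exact: ext_famKB_dim_TS.
exact: (@ext_famKB_TS_not_sub_L R n n_gt0 K j j_le' z z1 z_en z_Nen ext_z).
Qed.
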